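(* Let $\mathcal G=(\mathcal V,\mathcal E)$ be a finite digraph with vertices $v_1,\dots,v_N$, run the synchronous dynamics described in the context, let $K=\min\{k\ge 1: w_i[k]=\text{True for all } i=1,\dots,N\}$ and set $\mathcal S_i^*=z_i[K]$. Then $K$ exists, and for every $i$, $\mathcal S_i^*$ is the vertex set of the strongly connected component of $\mathcal G$ containing $v_i$. Consequently, the distinct subgraphs among $(\mathcal S_i^*,(\mathcal S_i^*\times\mathcal S_i^* )\cap\mathcal E)$, $i=1,\dots,N$, are exactly the strongly connected components $\mathcal G_1,\dots,\mathcal G_m$ of $\mathcal G$: their vertex sets are pairwise disjoint, each is a maximal strongly connected subgraph, and $\bigcup_s\mathcal G_s=(\bigcup_s\mathcal V_s,\bigcup_s\mathcal E_s)$ has vertex set $\mathcal V$ and edge set contained in $\mathcal E$.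
   Context: For $v\in\mathcal V$, $\mathcal N^-_{v}=\{u:(u,v)\in\mathcal E\}$ is the set of in-neighbors of $v$. A strongly connected component (SCC) is a maximal set of vertices such that for any two of its vertices there is a directed path from each to the other (a single vertex counts as strongly connected to itself); the SCC as a subgraph has vertex set $\mathcal V_s$ and edge set $(\mathcal V_s\times\mathcal V_s)\cap\mathcal E$. The dynamics are run synchronously by all vertices at every time step $k=0,1,2,\dots$: initialize $x_i[0]=\{v_i\}$, $y_i[0]=1$, $z_i[0]=\emptyset$, $w_i[0]=\text{False}$, and for $k\ge 0$ set $x_i[k+1]=\bigcup_{v_j\in\mathcal N^-_{v_i}\cup\{v_i\}}x_j[k]$; $y_i[k+1]=\max\{\max_{v_j\in\mathcal N^-_{v_i}}|x_j[k]|,\ |x_i[k+1]|\}$ (the inner maximum is omitted if $\mathcal N^-_{v_i}=\emptyset$); $z_i[k+1]=\{v_j:\ y_i[k+1]=y_j[k]\ \text{and}\ v_j\in\bigcup_{v_l\in\mathcal N^-_{v_i}\cup\{v_i\}}x_l[k]\}$; $w_i[k+1]=\text{True}$ if $y_i[k+1]=y_i[k]$ and False otherwise. All vertices keep updating until every vertex has $w_i=\text{True}$. *)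

From mathcomp Require Import all_boot.
Set Implicit Arguments. Unset Strict Implicit. Unset Printing Implicit Defensive.

Section Dynamics.
Variables (V : finType) (E : rel V).
(* E u v  <->  (u, v) is an edge; in-neighbours of v are the u with E u v. *)

Fixpoint xs (k : nat) (i : V) : {set V} :=
  match k with
  | 0 => [set i]
  | k'.+1 => \bigcup_(j | E j i || (j == i)) xs k' j
  end.

(* y_i[k]; the inner max over an empty in-neighbourhood is 0, i.e. omitted *)
Definition ys (k : nat) (i : V) : nat :=
  match k with
  | 0 => 1
  | k'.+1 => maxn (\max_(j | E j i) #|xs k' j|) #|xs k'.+1 i|
  end.

Definition zs (k : nat) (i : V) : {set V} :=
  match k with
  | 0 => set0
  | k'.+1 => [set j | (ys k'.+1 i == ys k' j) &&
                      (j \in \bigcup_(l | E l i || (l == i)) xs k' l)]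
  end.

Definition ws (k : nat) (i : V) : bool :=
  match k with
  | 0 => false
  | k'.+1 => ys k'.+1 i == ys k' i
  end.

(* strong connectivity of a vertex set: directed paths (in the whole graph)
   both ways between any two of its vertices; connect is the
   reflexive-transitive closure of E *)
Definition strongly_connected (S : {set V}) : Prop :=
  forall u v, u \in S -> v \in S -> connect E u v.

Definition is_scc (S : {set V}) : Prop :=
  S != set0 /\ strongly_connected S /\
  forall T : {set V}, strongly_connected T -> S \subset T -> T = S.

Definition scc_of (v : V) : {set V} :=
  [set u | connect E v u && connect E u v].

End Dynamics.

From mathcomp Require Import all_boot.
Set Implicit Arguments. Unset Strict Implicit. Unset Printing Implicit Defensive.

(* The set x_i[k] is exactly the set of vertices with a path of
   length at most k to v_i, y_i[k] is its cardinality, and w_i[k+1] says that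
   x_i stopped growing at step k.  The sets x_i[k] only grow and live in a
   finite type, so the total size sum_i |x_i[k]| bounds the number of steps at
   which some w_i is False: a first step K >= 1 with all w_i[K] = True exists.
   At that step every x_i is globally stable, hence x_i[K-1] = x_i[K] is the
   set anc(v_i) of all ancestors of v_i.  Finally, for an ancestor v_j of v_i
   one has anc(v_j) \subset anc(v_i), with equality of cardinalities iff v_i
   is also an ancestor of v_j; so z_i[K], the ancestors v_j of v_i with
   |anc(v_j)| = |anc(v_i)|, is the SCC of v_i. *)

Section Dynamics.
Variables (V : finType) (E : rel V).

(* The sets x_i[k] grow with k, since every vertex is its own neighbour. *)
Lemma xs_subS k i : xs E k i \subset xs E k.+1 i.
Proof. by apply: (bigcup_sup i); rewrite eqxx orbT. Qed.

Lemma xs_sub_le k m i : k <= m -> xs E k i \subset xs E m i.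
Proof.
elim: m => [|m IHm]; first by rewrite leqn0 => /eqP->.
rewrite leq_eqVlt => /orP[/eqP->//|/IHm k_sub_m].
exact: subset_trans k_sub_m (xs_subS _ _).
Qed.

(* y_i[k] is simply |x_i[k]|: the in-neighbours' sets are contained in x_i[k]. *)
Lemma ys_card k i : ys E k i = #|xs E k i|.
Proof.
case: k => [|k] /=; first by rewrite cards1.
apply/maxn_idPr/bigmax_leqP => j Eji; apply: subset_leq_card.
by apply: (bigcup_sup j); rewrite Eji.
Qed.

Lemma ws_xs k i : ws E k.+1 i = (xs E k.+1 i == xs E k i).
Proof.
rewrite /ws !ys_card; apply/eqP/eqP => [same_card|->//].
by apply/eqP; rewrite eq_sym eqEcard xs_subS same_card leqnn.
Qed.

Lemma zs_card k i :
  zs E k.+1 i = [set j in xs E k.+1 i | #|xs E k.+1 i| == #|xs E k j|].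
Proof. by apply/setP => j; rewrite !inE !ys_card andbC. Qed.

Definition ancestors (v : V) : {set V} := [set u | connect E u v].

Lemma ancestors_sub u v : connect E u v -> ancestors u \subset ancestors v.
Proof. by move=> uv; apply/subsetP => w; rewrite !inE => /connect_trans; apply. Qed.

Lemma xs_sub_ancestors k i : xs E k i \subset ancestors i.
Proof.
apply/subsetP; rewrite /ancestors.
elim: k i => [|k IHk] i u /=; first by rewrite !inE => /eqP->.
move=> /bigcupP[j /orP[Eji|/eqP->] /IHk]; rewrite !inE // => uj.
exact: connect_trans uj (connect1 Eji).
Qed.

Lemma xs_edge k i v u : v \in xs E k i -> E u v -> u \in xs E k.+1 i.
Proof.
elim: k i => [|k IHk] i.
  by rewrite inE => /eqP-> Euv; apply/bigcupP; exists u; rewrite ?Euv ?inE.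
by move=> /bigcupP[j ji vj] Euv; apply/bigcupP; exists j => //; exact: IHk vj Euv.
Qed.

Lemma ancestor_in_xs u i : connect E u i -> exists k, u \in xs E k i.
Proof.
move/connectP=> [p]; elim: p u => [|v p IHp] u /=.
  by move=> _ ->; exists 0; rewrite inE.
move=> /andP[Euv pv] last_p; have [k vk] := IHp v pv last_p.
by exists k.+1; exact: xs_edge vk Euv.
Qed.

Definition xs_stable (k : nat) : Prop := forall i, xs E k.+1 i = xs E k i.

(* The update of x is deterministic, so a stable step stays stable forever;
   together with the two facts above, the stable sets are the ancestor sets. *)
Lemma xs_stable_const k : xs_stable k -> forall m i, xs E (k + m) i = xs E k i.
Proof.
move=> st; elim=> [|m IHm] i; first by rewrite addn0.
by rewrite addnS -(st i) /=; apply: eq_bigr => j _; exact: IHm.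
Qed.

Lemma xs_stable_ancestors k : xs_stable k -> forall i, xs E k i = ancestors i.
Proof.
move=> st i; apply/eqP; rewrite eqEsubset xs_sub_ancestors /=.
apply/subsetP => u; rewrite inE => /ancestor_in_xs[m um].
by rewrite -(xs_stable_const st m i); apply: subsetP (xs_sub_le i (leq_addl k m)) _ um.
Qed.

(* Termination: the total size of the sets x_i[k] is at most |V|^2, and it
   increases strictly at every unstable step. *)
Definition total_size (k : nat) : nat := \sum_i #|xs E k i|.

Lemma total_size_bound k : total_size k <= #|V| * #|V|.
Proof. by rewrite /total_size -sum_nat_const; apply: leq_sum => i _; exact: max_card. Qed.

Lemma total_size_unstable k : ~ xs_stable k -> total_size k < total_size k.+1.
Proof.
move=> unst; have [i grows] : exists i, xs E k.+1 i != xs E k i.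
  apply/existsP; rewrite -negb_forall; apply/negP => /forallP st.
  by apply: unst => i; apply/eqP.
rewrite /total_size (bigD1 i) //= [X in _ < X](bigD1 i) //= -addSn.
apply: leq_add; last by apply: leq_sum => j _; apply/subset_leq_card/xs_subS.
by apply: proper_card; rewrite properEneq xs_subS andbT eq_sym.
Qed.

Lemma xs_stable_exists : exists k, xs_stable k.
Proof.
suff [//|] : (exists k, xs_stable k) \/
             (#|V| * #|V|).+1 <= total_size (#|V| * #|V|).+1.
  by rewrite leqNgt ltnS total_size_bound.
elim: _.+1 => [|n [found|IHn]]; [by right | by left |].
have [/forallP st|unst] := boolP [forall i, xs E n.+1 i == xs E n i].
  by left; exists n => i; apply/eqP.
right; apply: leq_ltn_trans IHn (total_size_unstable _) => st.
by apply: (negP unst); apply/forallP => i; rewrite st.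
Qed.

(* The first step K+1 >= 1 at which all w_i hold exists, and step K is
   stable: all w_i[k+1] hold iff step k is stable. *)
Lemma first_settled_step :
  exists K, [/\ forall i, ws E K.+1 i,
             forall k, 0 < k < K.+1 -> exists i, ~~ ws E k i & xs_stable K].
Proof.
have all_settled : exists k, (0 < k) && [forall i, ws E k i].
  have [k st] := xs_stable_exists.
  by exists k.+1; apply/forallP => i; rewrite ws_xs st.
have [[//|K] /andP[_ /forallP settled] minK] := ex_minnP all_settled.
exists K; split => // [k /andP[k_gt0 k_lt]|i]; last by apply/eqP; rewrite -ws_xs.
apply/existsP; apply: contraTT k_lt => /existsPn unsettled.
by rewrite -leqNgt minK // k_gt0; apply/forallP => i; exact: negbNE.
Qed.

Lemma scc_of_refl v : v \in scc_of E v.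
Proof. by rewrite inE connect0. Qed.

Lemma scc_of_mem u v : u \in scc_of E v -> scc_of E u = scc_of E v.
Proof.
rewrite inE => /andP[vu uv]; apply/setP => w; rewrite !inE.
apply/andP/andP => [[uw wu]|[vw wv]]; split.
- exact: connect_trans vu uw.
- exact: connect_trans wu uv.
- exact: connect_trans uv vw.
- exact: connect_trans wv vu.
Qed.

Lemma scc_of_is_scc v : is_scc E (scc_of E v).
Proof.
split; first by apply/set0Pn; exists v; exact: scc_of_refl.
split=> [u w|T sc_T sub].
  by rewrite !inE => /andP[_ uv] /andP[vw _]; exact: connect_trans uv vw.
apply/eqP; rewrite eqEsubset sub andbT; apply/subsetP => u uT.
have vT : v \in T by apply: (subsetP sub); exact: scc_of_refl.
by rewrite inE (sc_T _ _ vT uT) (sc_T _ _ uT vT).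
Qed.

Lemma is_scc_scc_of S : is_scc E S -> exists v, S = scc_of E v.
Proof.
move=> [/set0Pn [v vS] [sc_S max_S]]; exists v.
have [_ [sc_v _]] := scc_of_is_scc v; apply/esym/max_S => //.
by apply/subsetP => u uS; rewrite inE (sc_S _ _ vS uS) (sc_S _ _ uS vS).
Qed.

Lemma scc_of_eq_or_disjoint u v :
  scc_of E u = scc_of E v \/ [disjoint scc_of E u & scc_of E v].
Proof.
have [disj|/pred0Pn [w /andP[wu wv]]] := boolP [disjoint scc_of E u & scc_of E v].
  by right.
by left; rewrite -(scc_of_mem wu) -(scc_of_mem wv).
Qed.

Lemma scc_of_ancestors v :
  scc_of E v = [set u in ancestors v | #|ancestors v| == #|ancestors u|].
Proof.
apply/setP => u; rewrite !inE andbC; apply/andP/andP => [[vu uv]|[uv same]].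
  by split=> //; apply/eqP/eq_card => w; rewrite !inE;
     apply/idP/idP => /connect_trans; apply.
split=> //; have sub := ancestors_sub uv.
have : ancestors u == ancestors v by rewrite eqEcard sub (eqP same) leqnn.
by move/eqP/setP/(_ v); rewrite !inE connect0 => ->.
Qed.

Lemma zs_stable k : xs_stable k -> forall i, zs E k.+1 i = scc_of E i.
Proof.
move=> st i; have anc := xs_stable_ancestors st.
by apply/setP => j; rewrite zs_card scc_of_ancestors !inE (st i) !anc inE.
Qed.

End Dynamics.

Theorem theorem1 (V : finType) (E : rel V) :
  exists K : nat,
    (* K = min { k >= 1 : w_i[k] = True for all i } *)
    0 < K /\ (forall i, ws E K i) /\
    (forall k, 0 < k < K -> exists i, ~~ ws E k i) /\
    (* S_i^* = z_i[K] is the vertex set of the SCC containing v_i *)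
    (forall i, zs E K i = scc_of E i /\ is_scc E (zs E K i)) /\
    (* consequences *)
    (forall i j, zs E K i = zs E K j \/ [disjoint zs E K i & zs E K j]) /\
    (forall S : {set V}, is_scc E S -> exists i, S = zs E K i) /\
    \bigcup_i zs E K i = [set: V] /\
    [set p : V * V | [exists i, (p.1 \in zs E K i) && (p.2 \in zs E K i)
                                && E p.1 p.2]]
      \subset [set p : V * V | E p.1 p.2].
Proof.
have [K [settled minK st]] := first_settled_step E.
have zK := zs_stable st; exists K.+1.
do 3 (split => //).
split; first by move=> i; rewrite zK; split=> //; exact: scc_of_is_scc.
split; first by move=> i j; rewrite !zK; exact: scc_of_eq_or_disjoint.
split; first by move=> S /is_scc_scc_of[v ->]; exists v; rewrite zK.
split.
  by apply/setP => v; rewrite inE; apply/bigcupP; exists v; rewrite ?zK ?scc_of_refl.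
by apply/subsetP => p; rewrite !inE => /existsP[i /andP[_ ->]].
Qed.
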